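(* Let $r\ge2$, $k\ge 3$, and let $\widehat{F}_k$ be any $r$-coloring of $K_k$. Let $G$ be a graph on $n$ vertices, $S\subseteq V(G)$ an independent set with $s=|S|$, $H=G-S$ and $A=V(G)\setminus S$. Then there exists a vertex $v\in S$ with the following property: if $\widetilde{G}$ is the graph with vertex set $V(H)\cup\widetilde{S}$, where $\widetilde{S}$ is an independent set of $s$ new vertices each having neighborhood exactly $N_G(v)$ (so each is a twin of $v$), and $\widetilde{G}[A]=G[A]$, then $c_{r,\widehat{F}_k}(\widetilde{G})\ge c_{r,\widehat{F}_k}(G)$.
   Context: An $r$-coloring of a graph assigns colors from $\{1,\dots,r\}$ to edges (not necessarily properly). A copy of $\widehat{F}_k$ in a colored graph is a set of $k$ pairwise adjacent vertices admitting a bijection to $V(K_k)$ under which two edges have equal colors iff their images have equal colors in $\widehat{F}_k$; a coloring is $\widehat{F}_k$-free if it has no copy. $c_{r,\widehat{F}_k}(G)$ is the number of $\widehat{F}_k$-free $r$-colorings of $E(G)$. Two vertices are twins if they are non-adjacent and have the same neighborhood. *)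

From mathcomp Require Import all_boot.
Set Implicit Arguments. Unset Strict Implicit. Unset Printing Implicit Defensive.

(* A (simple) graph on a finite vertex type T is a boolean relation g,
   assumed symmetric and irreflexive where needed. *)

Definition edgeset (T : finType) (g : rel T) : {set {set T}} :=
  [set e : {set T} | [exists x, exists y, g x y && (e == [set x; y])]].

Definition edge_type (T : finType) (g : rel T) : finType :=
  {e : {set T} | e \in edgeset g}.

Definition coloring (T : finType) (g : rel T) (r : nat) : finType :=
  {ffun edge_type g -> 'I_r}.

Definition col (T : finType) (g : rel T) (r : nat) (c : coloring g r) (x y : T)
  : option 'I_r :=
  omap c (insub [set x; y] : option (edge_type g)).

Definition Kk (k : nat) : rel 'I_k := fun i j => i != j.

Definition has_copy (T : finType) (g : rel T) (r k : nat)
  (F : coloring (@Kk k) r) (c : coloring g r) : bool :=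
  [exists f : {ffun 'I_k -> T},
    [&& injectiveb f,
        [forall i, forall j, (i != j) ==> g (f i) (f j)] &
        [forall i, forall j, forall i', forall j',
           ((i != j) && (i' != j')) ==>
           ((col c (f i) (f j) == col c (f i') (f j'))
              == (col F i j == col F i' j'))]]].

Definition count_free (T : finType) (g : rel T) (r k : nat)
  (F : coloring (@Kk k) r) : nat :=
  #|[set c : coloring g r | ~~ has_copy F c]|.

(* The graph obtained from g by replacing the independent set S by |S|
   independent twins of v: vertices of S are reused as labels of the new
   twins; edges inside A = V \ S are unchanged; S stays independent; each
   vertex of S has neighborhood exactly N_g(v). *)
Definition twin_graph (T : finType) (g : rel T) (S : {set T}) (v : T) : rel T :=
  fun x y =>
    if x \in S then (y \notin S) && g v y
    else if y \in S then g v x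
    else g x y.

(* A copy of a coloured K_k lives on a clique, so it meets the independent set S
   in at most one vertex.  Hence a colouring of G is F-free iff its restriction c_A
   to G - S is F-free and, for every w in S, c_A together with the star of colours at
   w is F-free.  Writing N(c_A, w) for the number of admissible stars at w, this gives
   c(G) = sum_{c_A} prod_{w in S} N(c_A, w), while in the graph where all of S are
   twins of v it gives sum_{c_A} N(c_A, v)^s (the stars at w and at v correspond
   through the transposition of w and v).  By AM-GM,
   s * prod_w N(c_A, w) <= sum_w N(c_A, w)^s, so choosing v maximising
   sum_{c_A} N(c_A, v)^s proves the claim. *)

From mathcomp Require Import all_boot ssralg ssrnum ssrint perm.

Set Implicit Arguments.
Unset Strict Implicit.
Unset Printing Implicit Defensive.

Import GRing.Theory Num.Theory.

Lemma card_mul_prod_leq_sum_expn (I : finType) (A : {pred I}) (x : I -> nat) :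
  #|A| * \prod_(i in A) x i <= \sum_(i in A) x i ^ #|A|.
Proof.
have [->|n_gt0] := posnP #|A|; first by rewrite mul0n.
rewrite -(leq_exp2r _ _ n_gt0) -(ler_nat int) !natrX natrM natr_sum natr_prod.
rewrite mulr_natl exprMn_n -prodrXl -prodrMn_const.
under eq_bigr do rewrite -natrX.
apply: leif_AGM_scaled => i _.
by rewrite mulrn_wge0 // exprn_ge0.
Qed.

Lemma exists_sum_prod_leq_sum_expn (I J : finType) (A : {pred I}) (B : {pred J})
    (a : J -> I -> nat) :
  0 < #|A| ->
  exists2 v, v \in A & \sum_(j in B) \prod_(i in A) a j i <= \sum_(j in B) a j v ^ #|A|.
Proof.
move=> n_gt0; have /card_gt0P[i0 Ai0] := n_gt0.
pose M v := \sum_(j in B) a j v ^ #|A|.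
have [v Av M_max] := @arg_maxnP _ i0 (mem A) M Ai0.
exists v => //; rewrite -(leq_pmul2l n_gt0) big_distrr /=.
apply: (@leq_trans (\sum_(i in A) M i)).
  by rewrite exchange_big; apply: leq_sum => j _; apply: card_mul_prod_leq_sum_expn.
by rewrite -sum_nat_const; apply: leq_sum => i /M_max.
Qed.

Lemma eq_set2 (T : finType) (x y x' y' : T) :
  [set x; y] = [set x'; y'] -> (x' = x /\ y' = y) \/ (x' = y /\ y' = x).
Proof.
move=> E; have /set2P x'_xy : x' \in [set x; y] by rewrite E set21.
have /set2P y'_xy : y' \in [set x; y] by rewrite E set22.
have /set2P x_x'y' : x \in [set x'; y'] by rewrite -E set21.
have /set2P y_x'y' : y \in [set x'; y'] by rewrite -E set22.
by case: x'_xy y'_xy x_x'y' y_x'y' => -> [] -> [] ex [] ey; subst; auto.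
Qed.

Definition del_set (T : finType) (S : {set T}) (g : rel T) : rel T :=
  fun x y => [&& x \notin S, y \notin S & g x y].

Section TwinGraph.
Variables (T : finType) (g : rel T) (S : {set T}) (v : T).

Lemma twin_graph_sym : (forall x y, g x y = g y x) ->
  forall x y, twin_graph g S v x y = twin_graph g S v y x.
Proof. by move=> g_sym x y; rewrite /twin_graph; case: (x \in S); case: (y \in S). Qed.

Lemma twin_graph_indep x y : x \in S -> y \in S -> ~~ twin_graph g S v x y.
Proof. by rewrite /twin_graph => -> ->. Qed.

Lemma del_set_twin_graph : del_set S (twin_graph g S v) =2 del_set S g.
Proof. by move=> x y; rewrite /del_set /twin_graph; case: (x \in S); case: (y \in S). Qed.

Lemma twin_graph_star w y : (forall y, y \in S -> ~~ g v y) -> w \in S ->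
  twin_graph g S v w y = g v y.
Proof.
move=> v_indep Sw; rewrite /twin_graph Sw.
by have [/v_indep/negbTE-> | //] := boolP (y \in S).
Qed.

End TwinGraph.

Section Labelings.
Variables (r k : nat) (T : finType) (F : coloring (@Kk k) r).

(* Colourings of different graphs have different types; we compare them through
   labelings, which give an optional colour to every ordered pair of vertices. *)
Local Notation labeling := {ffun T -> {ffun T -> option 'I_r}}.
Local Notation star := {ffun T -> option 'I_r}.

Definition copy_in (h : labeling) (f : {ffun 'I_k -> T}) : bool :=
  [&& injectiveb f,
      [forall i, forall j, (i != j) ==> (h (f i) (f j) != None)] &
      [forall i, forall j, forall i', forall j',
         ((i != j) && (i' != j')) ==>
         ((h (f i) (f j) == h (f i') (f j')) == (col F i j == col F i' j'))]].

Definition has_copy_in (h : labeling) : bool := [exists f, copy_in h f].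

Lemma eq_copy_in (h h' : labeling) (f f' : {ffun 'I_k -> T}) :
  injectiveb f = injectiveb f' ->
  (forall i j, i != j -> h (f i) (f j) = h' (f' i) (f' j)) ->
  copy_in h f = copy_in h' f'.
Proof.
move=> eq_inj eq_h; rewrite /copy_in eq_inj; congr [&& _, _ & _].
  apply: eq_forallb => i; apply: eq_forallb => j.
  by case: (boolP (i != j)) => //= ij; rewrite eq_h.
do 4 apply: eq_forallb => ?.
by case: (boolP (_ != _)) => //= ij; case: (boolP (_ != _)) => //= ij'; rewrite !eq_h.
Qed.

Lemma copy_in_edge (h : labeling) f i j : copy_in h f -> i != j -> h (f i) (f j) != None.
Proof. by case/and3P => _ /forallP/(_ i)/forallP/(_ j)/implyP. Qed.

Lemma copy_in_sub (h h' : labeling) f :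
  (forall x y, h x y != None -> h' x y = h x y) -> copy_in h f -> copy_in h' f.
Proof.
move=> sub_h copy_f; rewrite -(@eq_copy_in h h' f f) // => i j ij.
by rewrite sub_h ?copy_in_edge.
Qed.

Lemma has_copy_in_relabel (p : T -> T) (h h' : labeling) :
  injective p -> (forall x y, h' (p x) (p y) = h x y) ->
  has_copy_in h -> has_copy_in h'.
Proof.
move=> p_inj h'p /existsP[f copy_f]; apply/existsP; exists [ffun i => p (f i)].
rewrite (@eq_copy_in _ h _ f) // => [|i j _]; last by rewrite !ffunE h'p.
apply/injectiveP/injectiveP => [pf_inj i j fij | f_inj i j].
  by apply: pf_inj; rewrite !ffunE fij.
by rewrite !ffunE => /p_inj/f_inj.
Qed.

Definition is_labeling (g : rel T) (h : labeling) : bool :=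
  [forall x, forall y, (h x y == h y x) && ((h x y != None) == g x y)].

Lemma is_labelingP (g : rel T) (h : labeling) :
  reflect ((forall x y, h x y = h y x) /\ (forall x y, (h x y != None) = g x y))
          (is_labeling g h).
Proof.
apply: (iffP forallP) => [lab_h | [h_sym h_supp] x].
  by split=> x y; have /forallP/(_ y)/andP[/eqP ? /eqP ?] := lab_h x.
by apply/forallP => y; rewrite h_supp eqxx andbT; apply/eqP/h_sym.
Qed.

Definition free_labelings (g : rel T) : {set labeling} :=
  [set h | is_labeling g h && ~~ has_copy_in h].

Lemma eq_free_labelings (g g' : rel T) : g =2 g' -> free_labelings g = free_labelings g'.
Proof.
move=> eq_g; apply/setP => h; rewrite !inE; congr (_ && _).
by do 2 apply: eq_forallb => ?; rewrite eq_g.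
Qed.

Section Colorings.
Variable g : rel T.
Hypothesis g_sym : forall x y, g x y = g y x.

Lemma edgesetE x y : ([set x; y] \in edgeset g) = g x y.
Proof.
apply/idP/idP => [|gxy]; last first.
  by rewrite inE; apply/existsP; exists x; apply/existsP; exists y; rewrite gxy eqxx.
rewrite inE => /existsP[x' /existsP[y' /andP[gx'y' /eqP/eq_set2 xy']]].
by case: xy' gx'y' => -[-> ->] //; rewrite g_sym.
Qed.

Lemma col_neq_None (c : coloring g r) x y : (col c x y != None) = g x y.
Proof.
rewrite /col -edgesetE; case: insubP => [e -> _|/negbTE->] //=.
Qed.

Lemma colC (c : coloring g r) x y : col c x y = col c y x.
Proof. by rewrite /col setUC. Qed.

Lemma col_edge (c : coloring g r) (e : edge_type g) x y :
  val e = [set x; y] -> col c x y = Some (c e).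
Proof.
move=> e_xy; rewrite /col; case: insubP => [e' _ e'_xy|]; last by rewrite -e_xy (valP e).
by congr (Some (c _)); apply: val_inj; rewrite e'_xy.
Qed.

Definition labeling_of (c : coloring g r) : labeling := [ffun x => [ffun y => col c x y]].

Lemma has_copy_labeling_of c : has_copy F c = has_copy_in (labeling_of c).
Proof.
apply: eq_existsb => f; congr [&& _, _ & _].
  by do 2 apply: eq_forallb => ?; rewrite !ffunE col_neq_None.
by do 4 apply: eq_forallb => ?; rewrite !ffunE.
Qed.

Lemma labeling_of_is_labeling c : is_labeling g (labeling_of c).
Proof. by apply/is_labelingP; split=> x y; rewrite !ffunE ?col_neq_None // colC. Qed.

Lemma labeling_of_inj : injective labeling_of.
Proof.
move=> c1 c2 eq_c; apply/ffunP => e.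
have := valP e; rewrite inE => /existsP[x /existsP[y /andP[_ /eqP e_xy]]].
have := congr1 (fun h : labeling => h x y) eq_c; rewrite !ffunE.
by rewrite (col_edge c1 e_xy) (col_edge c2 e_xy) => -[].
Qed.

Lemma labeling_of_surj (i0 : 'I_r) h : is_labeling g h -> exists c, labeling_of c = h.
Proof.
case/is_labelingP => h_sym h_supp.
pose c : coloring g r := [ffun e : edge_type g => odflt i0
  (if [pick xy : T * T | val e == [set xy.1; xy.2]] is Some xy then h xy.1 xy.2 else None)].
exists c; apply/ffunP => x; apply/ffunP => y; rewrite !ffunE.
have [gxy|ngxy] := boolP (g x y); last first.
  move: (col_neq_None c x y) (h_supp x y); rewrite (negbTE ngxy).
  by move=> /negbFE/eqP-> /negbFE/eqP->.
have xy_edge : [set x; y] \in edgeset g by rewrite edgesetE.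
rewrite (@col_edge c (Sub [set x; y] xy_edge) x y) // ffunE /=.
have h_xy : h x y = Some (odflt i0 (h x y)) by case: (h x y) (h_supp x y); rewrite gxy.
case: pickP => [[x' y'] /eqP/eq_set2[][-> ->] | /(_ (x, y))] /=; last by rewrite eqxx.
  by rewrite h_xy.
by rewrite h_sym h_xy.
Qed.

Lemma count_free_labelings : 0 < r -> count_free g F = #|free_labelings g|.
Proof.
move=> r_gt0; rewrite /count_free -(card_imset _ labeling_of_inj).
apply: eq_card => h; rewrite inE; apply/imsetP/andP => [[c] | [lab_h free_h]].
  by rewrite inE has_copy_labeling_of => ? ->; rewrite labeling_of_is_labeling.
have [c def_h] := labeling_of_surj (Ordinal r_gt0) lab_h.
by exists c; rewrite // inE has_copy_labeling_of def_h.
Qed.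

End Colorings.

Section IndependentSet.
Variable S : {set T}.

Definition restrict_off (h : labeling) : labeling :=
  [ffun x => [ffun y => if (x \in S) || (y \in S) then None else h x y]].

Definition attach_star (hA : labeling) (w : T) (s : star) : labeling :=
  [ffun x => [ffun y => if x == w then s y else if y == w then s x else hA x y]].

Definition glue (hA ss : labeling) : labeling :=
  [ffun x => [ffun y => if x \in S then ss x y else if y \in S then ss y x else hA x y]].

Definition good_stars (g : rel T) (hA : labeling) (w : T) : {set star} :=
  [set s : star | [forall y, (s y != None) == g w y] && ~~ has_copy_in (attach_star hA w s)].

Lemma del_set_labeling_None g hA x y :
  is_labeling (del_set S g) hA -> (x \in S) || (y \in S) -> hA x y = None.
Proof.
case/is_labelingP => _ hA_supp xyS; apply/eqP; rewrite -[_ == _]negbK hA_supp /del_set.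
by case/orP: xyS => ->; rewrite ?andbF.
Qed.

Lemma restrict_off_id g hA : is_labeling (del_set S g) hA -> restrict_off hA = hA.
Proof.
move=> lab_hA; apply/ffunP => x; apply/ffunP => y; rewrite !ffunE.
by case: ifP => // /(del_set_labeling_None lab_hA).
Qed.

Lemma restrict_off_glue hA (ss : labeling) : restrict_off (glue hA ss) = restrict_off hA.
Proof.
apply/ffunP => x; apply/ffunP => y; rewrite !ffunE.
by case: ifP => //; case: (x \in S); case: (y \in S).
Qed.

Lemma glue_star hA (ss : labeling) w : w \in S -> glue hA ss w = ss w.
Proof. by move=> Sw; apply/ffunP => y; rewrite !ffunE Sw. Qed.

Lemma eq_glue hA (ss ss' : labeling) : {in S, ss =1 ss'} -> glue hA ss = glue hA ss'.
Proof.
move=> eq_ss; apply/ffunP => x; apply/ffunP => y; rewrite !ffunE.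
by case: ifP => [/eq_ss-> // | _]; case: ifP => // /eq_ss->.
Qed.

Section Graph.
Variable g : rel T.
Hypothesis g_sym : forall x y, g x y = g y x.
Hypothesis S_indep : forall x y, x \in S -> y \in S -> ~~ g x y.

Lemma is_labeling_restrict_off h :
  is_labeling g h -> is_labeling (del_set S g) (restrict_off h).
Proof.
case/is_labelingP => h_sym h_supp; apply/is_labelingP; split=> x y; rewrite !ffunE.
  by rewrite orbC h_sym.
by rewrite /del_set; case: (x \in S); case: (y \in S); rewrite //= h_supp.
Qed.

Lemma glue_restrict_off h : is_labeling g h -> glue (restrict_off h) h = h.
Proof.
case/is_labelingP => h_sym _; apply/ffunP => x; apply/ffunP => y; rewrite !ffunE.
by case: (x \in S); case: (y \in S); rewrite //= h_sym.
Qed.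

Lemma is_labeling_glue hA (ss : labeling) :
  is_labeling (del_set S g) hA -> (forall w y, w \in S -> (ss w y != None) = g w y) ->
  is_labeling g (glue hA ss).
Proof.
case/is_labelingP => hA_sym hA_supp ss_supp.
have ss_indep x y : x \in S -> y \in S -> ss x y = None.
  by move=> Sx Sy; apply/eqP; rewrite -[_ == _]negbK ss_supp // (negbTE (S_indep Sx Sy)).
apply/is_labelingP; split=> x y; rewrite !ffunE.
  by case Sx: (x \in S); case Sy: (y \in S); rewrite // !ss_indep.
case Sx: (x \in S); case Sy: (y \in S); rewrite ?ss_supp // 1?g_sym //.
by rewrite hA_supp /del_set Sx Sy.
Qed.

Lemma has_copy_in_decomp h : is_labeling g h ->
  has_copy_in h = has_copy_in (restrict_off h)
                  || [exists w in S, has_copy_in (attach_star (restrict_off h) w (h w))].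
Proof.
case/is_labelingP => h_sym h_supp.
have h_indep x y : x \in S -> y \in S -> h x y = None.
  by move=> Sx Sy; apply/eqP; rewrite -[_ == _]negbK h_supp (negbTE (S_indep Sx Sy)).
apply/idP/idP => [/existsP[f copy_f] | ].
  have [i0 /= S_fi0 | notS_f] := pickP (fun i => f i \in S).
    apply/orP; right; apply/exists_inP; exists (f i0) => //; apply/existsP; exists f.
    rewrite -(@eq_copy_in h _ f f) // => i j ij; rewrite !ffunE.
    have [-> // | fi_ne] := eqVneq (f i) (f i0).
    have [-> | fj_ne] := eqVneq (f j) (f i0); first exact: h_sym.
    case: ifP => // /orP S_fifj; exfalso; case: S_fifj => [S_fi | S_fj].
      have : i != i0 by apply: contra_neq fi_ne => ->.
      by move/(copy_in_edge copy_f); rewrite h_indep.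
    have : j != i0 by apply: contra_neq fj_ne => ->.
    by move/(copy_in_edge copy_f); rewrite h_indep.
  apply/orP; left; apply/existsP; exists f.
  by rewrite -(@eq_copy_in h _ f f) // => i j _; rewrite !ffunE !notS_f.
case/orP => [/existsP[f copy_f] | /exists_inP[w Sw /existsP[f copy_f]]];
  apply/existsP; exists f; apply: copy_in_sub copy_f => x y; rewrite !ffunE.
  by case: ifP.
have [-> // | xw] := eqVneq x w; have [-> | yw] := eqVneq y w; first by rewrite h_sym.
by case: ifP.
Qed.

Lemma fiber_restrict_off hA : hA \in free_labelings (del_set S g) ->
  [set h in free_labelings g | restrict_off h == hA]
  = glue hA @: pfamily [ffun=> None] S (good_stars g hA).
Proof.
rewrite inE => /andP[lab_hA free_hA]; apply/setP => h; rewrite !inE.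
apply/idP/imsetP => [/andP[/andP[lab_h free_h] /eqP hA_def] | [ss]].
  have [_ h_supp] := is_labelingP _ _ lab_h.
  exists [ffun w => if w \in S then h w else [ffun=> None]]; last first.
    by rewrite -{1}(glue_restrict_off lab_h) hA_def; apply: eq_glue => w Sw; rewrite ffunE Sw.
  apply/pfamilyP; split=> [|w Sw]; first by apply/supportP => w /negbTE Sw; rewrite ffunE Sw.
  rewrite ffunE Sw inE; apply/andP; split; first by apply/forallP => y; rewrite h_supp.
  by move: free_h; rewrite has_copy_in_decomp // hA_def negb_or => /andP[_ /exists_inPn->].
case/pfamilyP => /supportP ss_out ss_good ->.
have ss_star w : w \in S -> [forall y, (ss w y != None) == g w y] &&
                              ~~ has_copy_in (attach_star hA w (ss w)).
  by move=> Sw; have := ss_good w Sw; rewrite inE.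
have lab_glue : is_labeling g (glue hA ss).
  by apply: is_labeling_glue => // w y /ss_star/andP[/forallP/(_ y)/eqP].
rewrite lab_glue restrict_off_glue (restrict_off_id lab_hA) eqxx andbT /=.
rewrite has_copy_in_decomp // restrict_off_glue (restrict_off_id lab_hA) negb_or free_hA /=.
by apply/exists_inPn => w Sw; rewrite glue_star //; case/andP: (ss_star w Sw).
Qed.

Lemma card_fiber_restrict_off hA : hA \in free_labelings (del_set S g) ->
  #|[set h in free_labelings g | restrict_off h == hA]| = \prod_(w in S) #|good_stars g hA w|.
Proof.
move=> free_hA; rewrite fiber_restrict_off // card_in_imset.
  by rewrite card_pfamily foldrE big_map big_enum.
move=> ss ss' /pfamilyP[/supportP ss_out _] /pfamilyP[/supportP ss'_out _] eq_glue_ss.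
apply/ffunP => w; have [Sw | notSw] := boolP (w \in S); last by rewrite ss_out ?ss'_out.
by rewrite -(glue_star hA ss Sw) eq_glue_ss glue_star.
Qed.

Lemma count_free_decomp : 0 < r ->
  count_free g F =
    \sum_(hA in free_labelings (del_set S g)) \prod_(w in S) #|good_stars g hA w|.
Proof.
move=> r_gt0; rewrite count_free_labelings // -sum1_card.
rewrite (partition_big restrict_off (mem (free_labelings (del_set S g)))) /=; last first.
  move=> h; rewrite !inE => /andP[lab_h free_h]; rewrite is_labeling_restrict_off //=.
  by move: free_h; rewrite has_copy_in_decomp // negb_or => /andP[].
apply: eq_bigr => hA free_hA; rewrite -card_fiber_restrict_off // -sum1_card.
by apply: eq_bigl => h; rewrite inE.
Qed.

Lemma attach_star_tperm hA (s : star) w v x y :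
  is_labeling (del_set S g) hA -> {in S, forall y, s y = None} -> w \in S -> v \in S ->
  attach_star hA v s (tperm w v x) (tperm w v y) = attach_star hA w s x y.
Proof.
move=> lab_hA s_indep Sw Sv.
have tperm_out z : z \notin S -> tperm w v z = z.
  by move=> notSz; apply: tpermD; apply: contraNneq notSz => <-.
have tpermS z : (tperm w v z \in S) = (z \in S).
  by case: tpermP => [-> | -> | //]; rewrite ?Sw ?Sv.
have s_tperm z : s (tperm w v z) = s z.
  have [Sz | /tperm_out-> //] := boolP (z \in S).
  by rewrite !s_indep ?tpermS.
have hA_tperm : hA (tperm w v x) (tperm w v y) = hA x y.
  have [Sxy | ] := boolP ((x \in S) || (y \in S)).
    by rewrite !(del_set_labeling_None lab_hA) ?tpermS.
  by rewrite negb_or => /andP[/tperm_out-> /tperm_out->].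
have tperm_v z : (tperm w v z == v) = (z == w) by rewrite (canF_eq (tpermK w v)) tpermR.
by rewrite !ffunE !tperm_v !s_tperm hA_tperm.
Qed.

Lemma good_stars_twin hA v w : v \in S -> w \in S -> is_labeling (del_set S g) hA ->
  good_stars (twin_graph g S v) hA w = good_stars g hA v.
Proof.
move=> Sv Sw lab_hA; apply/setP => s; rewrite !inE.
have v_indep y : y \in S -> ~~ g v y by apply: S_indep.
under eq_forallb => y do rewrite twin_graph_star //.
apply: andb_id2l => /forallP s_supp.
have s_indep : {in S, forall y, s y = None}.
  by move=> y Sy; apply/eqP; rewrite -[_ == _]negbK (eqP (s_supp y)) v_indep.
congr (~~ _); apply/idP/idP; apply: has_copy_in_relabel (@perm_inj _ (tperm _ _)) _ => x y;
  exact: attach_star_tperm.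
Qed.

End Graph.
End IndependentSet.
End Labelings.

Theorem lemma2p7 (r k : nat) (T : finType) (g : rel T) (S : {set T})
  (F : coloring (@Kk k) r) :
  2 <= r -> 3 <= k ->
  (forall x y, g x y = g y x) -> (forall x, ~~ g x x) ->
  (forall x y, x \in S -> y \in S -> ~~ g x y) ->
  0 < #|S| ->
  exists2 v, v \in S &
    count_free g F <= count_free (twin_graph g S v) F.
Proof.
move=> r_ge2 _ g_sym _ S_indep S_gt0; have r_gt0 : 0 < r by apply: leq_trans r_ge2.
have [v Sv le_v] := exists_sum_prod_leq_sum_expn (free_labelings F (del_set S g))
  (fun hA w => #|good_stars F g hA w|) S_gt0.
have twin_sym := twin_graph_sym S v g_sym.
have twin_indep := @twin_graph_indep _ g S v.
exists v => //.
rewrite (count_free_decomp F g_sym S_indep r_gt0).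
rewrite (count_free_decomp F twin_sym twin_indep r_gt0).
rewrite (eq_free_labelings F (del_set_twin_graph g S v)); apply: leq_trans le_v _.
apply/eq_leq/eq_bigr => hA; rewrite inE => /andP[lab_hA _].
by rewrite -prod_nat_const; apply: eq_bigr => w Sw; rewrite good_stars_twin.
Qed.
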